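(* Let $A\in\mathbb{R}^{d\times d}$, $N\ge1$, real coefficients $h_{k,j}$ ($1\le k\le N$, $0\le j\le k-1$), and $x_{k+1}=x_k-\sum_{j=0}^k h_{k+1,j}Ax_j$ for $k=0,\dots,N-1$. Then for $k=1,\dots,N$, \[ x_k=\sum_{m=0}^{k}(-1)^mP(k,m)A^mx_0, \] where $P(k,0)=1$ and, for $1\le m\le k$, $P(k,m)=\sum\prod_{\ell=1}^m h_{i(\ell),j(\ell)}$, the sum ranging over all integer sequences $(i(1),j(1)),\dots,(i(m),j(m))$ with $0\le j(\ell)<i(\ell)$ for all $\ell$, $i(\ell)\le j(\ell+1)$ for $\ell=1,\dots,m-1$, and $i(m)\le k$. *)

From HB Require Import structures.
From mathcomp Require Import all_boot all_order all_algebra.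
From mathcomp Require Import reals.
Set Implicit Arguments. Unset Strict Implicit. Unset Printing Implicit Defensive.
Import Order.TTheory GRing.Theory Num.Theory.
Local Open Scope ring_scope.

(* An index sequence (i(1),j(1)),...,(i(m),j(m)) is encoded as a finite
   function s : 'I_m -> 'I_(k.+1) * 'I_(k.+1), with (s l) = (i(l+1), j(l+1)).
   The constraints 0 <= j(l) < i(l), i(l) <= j(l+1), i(m) <= k force all
   entries to lie in {0,...,k}, so the range 'I_(k.+1) loses no sequence. *)
Definition admissible (k m : nat) (s : {ffun 'I_m -> 'I_k.+1 * 'I_k.+1}) : bool :=
  [&& [forall l : 'I_m, ((s l).2 < (s l).1)%N],
      [forall l : 'I_m, forall l' : 'I_m,
          ((l' : nat).+1 == l) ==> ((s l').1 <= (s l).2)%N]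
    & [forall l : 'I_m, ((l : nat).+1 == m) ==> ((s l).1 <= k)%N]].

Definition P {R : pzRingType} (h : nat -> nat -> R) (k m : nat) : R :=
  if m == 0%N then 1 else
  \sum_(s : {ffun 'I_m -> 'I_k.+1 * 'I_k.+1} | admissible s)
     \prod_(l < m) h (s l).1 (s l).2.

From HB Require Import structures.
From mathcomp Require Import all_boot all_order all_algebra.
From mathcomp Require Import reals ring.
Set Implicit Arguments. Unset Strict Implicit. Unset Printing Implicit Defensive.
Import Order.TTheory GRing.Theory Num.Theory.
Local Open Scope ring_scope.

(* Proof idea: an admissible sequence of length m+1 bounded by k is an
   admissible sequence of length m bounded by j followed by a last pair (i, j)
   with j < i <= k, so P(k, m+1) = sum_(j < i <= k) P(j, m) h(i, j) and hence
   P(k+1, m+1) - P(k, m+1) = sum_(j <= k) P(j, m) h(k+1, j).  Substituting the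
   closed forms of x_0, ..., x_k into the recurrence and comparing the
   coefficients of A^(m+1) x_0 gives the closed form of x_(k+1). *)

Section FfunRcons.
Variables (T : Type) (m : nat).

Definition ffun_rcons (g : {ffun 'I_m -> T}) (t : T) : {ffun 'I_m.+1 -> T} :=
  [ffun i => if unlift ord_max i is Some j then g j else t].

Lemma ffun_rcons_lift g t j : ffun_rcons g t (lift ord_max j) = g j.
Proof. by rewrite ffunE liftK. Qed.

Lemma ffun_rcons_max g t : ffun_rcons g t ord_max = t.
Proof. by rewrite ffunE unlift_none. Qed.

Lemma ffun_rcons_widen g t j : ffun_rcons g t (widen_ord (leqnSn m) j) = g j.
Proof.
have -> : widen_ord (leqnSn m) j = lift ord_max j by exact/val_inj/esym/lift_max.
exact: ffun_rcons_lift.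
Qed.

End FfunRcons.

Lemma forall_ordS m (P : pred 'I_m.+1) :
  [forall i, P i] = [forall i : 'I_m, P (lift ord_max i)] && P ord_max.
Proof.
apply/forallP/andP => [allP | [/forallP liftP maxP] i].
  by split; [apply/forallP => i |]; apply: allP.
by case: (unliftP ord_max i) => [j ->|->].
Qed.

Lemma big_ffunS (R : Type) (idx : R) (op : Monoid.com_law idx) (T : finType) m
    (P : pred {ffun 'I_m.+1 -> T}) (F : {ffun 'I_m.+1 -> T} -> R) :
  \big[op/idx]_(f | P f) F f =
  \big[op/idx]_(p : T * {ffun 'I_m -> T} | P (ffun_rcons p.2 p.1)) F (ffun_rcons p.2 p.1).
Proof.
rewrite (reindex (fun p : T * {ffun 'I_m -> T} => ffun_rcons p.2 p.1)) //.
exists (fun f : {ffun 'I_m.+1 -> T} => (f ord_max, [ffun j => f (lift ord_max j)])) => [[t g] _ | f _].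
  by rewrite /= ffun_rcons_max; congr pair; apply/ffunP => j; rewrite ffunE ffun_rcons_lift.
by apply/ffunP => i; rewrite ffunE; case: unliftP => [j ->|->]; rewrite ?ffunE.
Qed.

(* [admissible] is [chain] with K = k.+1; leaving the range K free lets the
   prefix of a chain, bounded by some j < k, be compared with [P h j]. *)
Definition chain {K : nat} (k m : nat) (s : {ffun 'I_m -> 'I_K * 'I_K}) : bool :=
  [&& [forall l : 'I_m, ((s l).2 < (s l).1)%N],
      [forall l : 'I_m, forall l' : 'I_m,
          ((l' : nat).+1 == l) ==> ((s l').1 <= (s l).2)%N]
    & [forall l : 'I_m, ((l : nat).+1 == m) ==> ((s l).1 <= k)%N]].

Lemma chain_rcons K k m (g : {ffun 'I_m -> 'I_K * 'I_K}) t :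
  chain k (ffun_rcons g t) = [&& (t.1 <= k)%N, (t.2 < t.1)%N & chain t.2 g].
Proof.
set r := ffun_rcons g t.
have r_max : r ord_max = t := ffun_rcons_max g t.
have r_lift (l : 'I_m) : r (lift ord_max l) = g l := ffun_rcons_lift g t l.
have steps : [forall l : 'I_m.+1, ((r l).2 < (r l).1)%N] =
             [forall l : 'I_m, ((g l).2 < (g l).1)%N] && (t.2 < t.1)%N.
  by rewrite forall_ordS r_max; congr andb; apply: eq_forallb => l; rewrite r_lift.
have links : [forall l : 'I_m.+1, forall l' : 'I_m.+1, (l'.+1 == l) ==> ((r l').1 <= (r l).2)%N]
    = [forall l : 'I_m, forall l' : 'I_m, (l'.+1 == l) ==> ((g l').1 <= (g l).2)%N]
      && [forall l : 'I_m, (l.+1 == m) ==> ((g l).1 <= t.2)%N].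
  apply/forallP/andP => [r_links | [/forallP g_links /forall_inP g_last] l].
    split; [apply/forallP => l|]; apply/forall_inP => l' e.
      have := forall_inP (r_links (lift ord_max l)) (lift ord_max l').
      by rewrite !r_lift !lift_max; apply.
    have := forall_inP (r_links ord_max) (lift ord_max l').
    by rewrite r_lift r_max lift_max /= (eqP e); apply.
  apply/forall_inP => l' /eqP e.
  case: (unliftP ord_max l') e => [j' ->|->] e; last by move: (ltn_ord l); rewrite -e ltnn.
  case: (unliftP ord_max l) e => [j ->|->] e; rewrite !r_lift ?r_max.
    by rewrite !lift_max in e; apply: (forall_inP (g_links j)); rewrite e.
  by rewrite lift_max in e; apply: g_last; rewrite e.
have last_le : [forall l : 'I_m.+1, (l.+1 == m.+1) ==> ((r l).1 <= k)%N] = (t.1 <= k)%N.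
  apply/forallP/idP => [r_last | tk l]; first by have := r_last ord_max; rewrite r_max eqxx.
  apply/implyP; rewrite eqSS => /eqP lm.
  have -> : l = ord_max by apply: val_inj.
  by rewrite r_max.
rewrite /chain steps links last_le.
by case: (t.1 <= k)%N; case: (t.2 < t.1)%N; rewrite ?andbF ?andbT.
Qed.

Section ChainSum.
Variables (R : pzRingType) (h : nat -> nat -> R).

Definition chain_sum K k m : R :=
  \sum_(s : {ffun 'I_m -> 'I_K * 'I_K} | chain k s) \prod_(l < m) h (s l).1 (s l).2.

Lemma chain_sum0 K k : chain_sum K k 0 = 1.
Proof.
rewrite /chain_sum (eq_bigl xpredT) => [|s]; last by apply/and3P; split; apply/forallP; case.
under eq_bigr do rewrite big_ord0.
by rewrite sumr_const card_ffun card_ord expn0.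
Qed.

Lemma chain_sumS K k m : (k < K)%N ->
  chain_sum K k m.+1 = \sum_(i < k.+1) \sum_(j < i) chain_sum K j m * h i j.
Proof.
move=> lt_kK; rewrite /chain_sum big_ffunS.
under eq_bigl do rewrite chain_rcons andbA.
under eq_bigr do rewrite big_ord_recr /= ffun_rcons_max.
under eq_bigr do under eq_bigr do rewrite ffun_rcons_widen.
rewrite -(pair_big_dep (fun t : 'I_K * 'I_K => (t.1 <= k)%N && (t.2 < t.1)%N)
  (fun t (g : {ffun 'I_m -> 'I_K * 'I_K}) => chain t.2 g)
  (fun t g => \prod_(l < m) h (g l).1 (g l).2 * h t.1 t.2)) /=.
under eq_bigr do rewrite -mulr_suml.
rewrite -(pair_big_dep (fun i : 'I_K => (i <= k)%N) (fun i (j : 'I_K) => (j < i)%N)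
   (fun i j => chain_sum K j m * h i j)) /=.
rewrite (big_ord_widen K (fun i => \sum_(j < i) chain_sum K j m * h i j)) //.
apply: eq_bigr => i _.
by rewrite (big_ord_widen _ (fun j => chain_sum K j m * h i j) (ltnW (ltn_ord i))).
Qed.

Lemma chain_sum_widen K k m : (k < K)%N -> chain_sum K k m = chain_sum k.+1 k m.
Proof.
elim: m K k => [|m IH] K k lt_kK; first by rewrite !chain_sum0.
rewrite !chain_sumS //; apply: eq_bigr => i _; apply: eq_bigr => j _.
have lt_jk : (j < k.+1)%N := ltn_trans (ltn_ord j) (ltn_ord i).
by rewrite (IH _ _ (leq_trans lt_jk lt_kK)) (IH _ _ lt_jk).
Qed.

Lemma P_chain_sum k m : P h k m = chain_sum k.+1 k m.
Proof. by case: m => [|m]; rewrite ?chain_sum0. Qed.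

Lemma PS k m : P h k m.+1 = \sum_(i < k.+1) \sum_(j < i) P h j m * h i j.
Proof.
rewrite P_chain_sum chain_sumS //; apply: eq_bigr => i _; apply: eq_bigr => j _.
by rewrite P_chain_sum chain_sum_widen // (ltn_trans (ltn_ord j) (ltn_ord i)).
Qed.

Lemma PSS k m : P h k.+1 m.+1 = P h k m.+1 + \sum_(j < k.+1) P h j m * h k.+1 j.
Proof. by rewrite PS big_ord_recr /= -PS. Qed.

Lemma P0S m : P h 0 m.+1 = 0.
Proof. by rewrite PS big_ord1 big_ord0. Qed.

End ChainSum.

Section ClosedForm.
Variables (R : comPzRingType) (d : nat) (A : 'M[R]_d) (h : nat -> nat -> R).

(* The truncation length n is left free: [A *m closed_form x0 n j] then has
   exactly the powers A^1, ..., A^n that occur in [closed_form x0 n.+1 _]. *)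
Definition closed_form (x0 : 'cV[R]_d) n k :=
  \sum_(m < n) ((-1) ^+ m * P h k m) *: (A ^+ m *m x0).

Lemma closed_form_at0 x0 n : closed_form x0 n.+1 0 = x0.
Proof.
rewrite /closed_form big_ord_recl big1 => [|m _]; last by rewrite lift0 P0S mulr0 scale0r.
by rewrite mulr1 scale1r mul1mx addr0.
Qed.

Lemma closed_formS x0 n k :
  closed_form x0 n.+1 k.+1
  = closed_form x0 n.+1 k - \sum_(j < k.+1) h k.+1 j *: (A *m closed_form x0 n j).
Proof.
have A_closed_form j : A *m closed_form x0 n j
    = \sum_(m < n) ((-1) ^+ m * P h j m) *: (A ^+ m.+1 *m x0).
  by rewrite mulmx_sumr; apply: eq_bigr => m _; rewrite -scalemxAr mulmxA exprS mulmxE.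
under eq_bigr do rewrite A_closed_form scaler_sumr.
rewrite exchange_big /closed_form !big_ord_recl -addrA -sumrB.
congr (_ + _); apply: eq_bigr => m _.
under eq_bigr do rewrite scalerA.
rewrite -scaler_suml -scalerBl lift0 PSS; congr (_ *: _).
have -> : \sum_(j < k.+1) h k.+1 j * ((-1) ^+ m * P h j m)
          = (-1) ^+ m * \sum_(j < k.+1) P h j m * h k.+1 j.
  by rewrite mulr_sumr; apply: eq_bigr => j _; ring.
by rewrite exprS; ring.
Qed.

Lemma recurrence_closed_form N (x : nat -> 'cV[R]_d) :
    (forall k, (k < N)%N -> x k.+1 = x k - \sum_(j < k.+1) h k.+1 j *: (A *m x j)) ->
  forall k n, (k <= N)%N -> (k < n)%N -> x k = closed_form (x 0%N) n k.
Proof.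
move=> rec k; elim/ltn_ind: k => [[|k]] IH [|n] // lt_kN lt_kn.
  by rewrite closed_form_at0.
have le_kN : (k <= N)%N := ltnW lt_kN.
rewrite rec // closed_formS (IH k _ n.+1 le_kN (ltnW lt_kn)) //.
congr (_ - _); apply: eq_bigr => j _.
have le_jk : (j <= k)%N := ltn_ord j.
by rewrite (IH j _ n (leq_trans le_jk le_kN) (leq_ltn_trans le_jk lt_kn)).
Qed.

End ClosedForm.

Theorem lemmaI2 (R : realType) (d N : nat) (A : 'M[R]_d)
    (h : nat -> nat -> R) (x : nat -> 'cV[R]_d) :
  (1 <= N)%N ->
  (forall k : nat, (k < N)%N ->
     x k.+1 = x k - \sum_(j < k.+1) h k.+1 j *: (A *m x j)) ->
  forall k : nat, (1 <= k <= N)%N ->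
    x k = \sum_(m < k.+1) ((-1) ^+ m * P h k m) *: (A ^+ m *m x 0%N).
Proof.
move=> _ rec k /andP[_ le_kN].
exact: (recurrence_closed_form rec le_kN (ltnSn k)).
Qed.
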